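(* Let $s\ge 2$ be an even constant and $\epsilon$ a constant with $0<\epsilon<1/(2s-1)$. For every instance of the class $G^*_\epsilon$ (with $n$ even), the expected number of fitness function evaluations the $(1+1)$~EA needs to find an optimal solution is at least $n^{\Omega(n)}$.
   Context: Partition problem: an instance consists of $n$ jobs with positive processing times $p_1,\dots,p_n$. A solution is $x\in\{0,1\}^n$ (job $i$ on machine $M_1$ if $x_i=0$, on $M_2$ if $x_i=1$), with makespan $f(x)=\max\{\sum_i p_ix_i,\sum_i p_i(1-x_i)\}$ to be minimised; an optimal solution minimises $f$. The class $G^*_\epsilon$: instances with an even number $n$ of jobs, an even number $s=\Theta(1)$ of large jobs, and processing times $p_i=\frac{1}{2s-1}-\frac{\epsilon}{2s}$ for $i\le s$ and $p_i=\frac{s-1}{n-s}\left(\frac{1}{2s-1}+\frac{\epsilon}{2(s-1)}\right)$ for $s<i\le n$, where $0<\epsilon<1/(2s-1)$ is an arbitrarily small constant. The $(1+1)$~EA (minimisation): initialise $x\in\{0,1\}^n$ uniformly at random; in each iteration create $y$ by flipping each bit of $x$ independently with probability $1/n$, and set $x:=y$ if $f(y)\le f(x)$. Asymptotics are as $n\to\infty$. *)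

From HB Require Import structures.
From mathcomp Require Import all_boot all_order all_algebra.
From mathcomp Require Import all_classical all_reals all_analysis.
Set Implicit Arguments. Unset Strict Implicit. Unset Printing Implicit Defensive.
Import Order.TTheory GRing.Theory Num.Theory.
Local Open Scope ring_scope.

Section PartitionEA.
Variable R : realType.

(* A solution: x : {ffun 'I_n -> bool}; x i = false means job i on M1,
   x i = true means job i on M2.  Jobs are 0-indexed: job i is the paper's job i+1. *)
Definition bits (n : nat) := {ffun 'I_n -> bool}.

Definition makespan n (p : 'I_n -> R) (x : bits n) : R :=
  Num.max (\sum_(i < n) p i * (x i)%:R) (\sum_(i < n) p i * (1 - (x i)%:R)).

Definition optimal n (p : 'I_n -> R) (x : bits n) : bool :=
  [forall y : bits n, makespan p x <= makespan p y].

(* The class G*_eps: processing times (paper's i <= s is our i < s). *)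
Definition Gstar_p (s : nat) (eps : R) (n : nat) (i : 'I_n) : R :=
  if (i < s)%N then 1 / (2 * s%:R - 1) - eps / (2 * s%:R)
  else (s%:R - 1) / (n%:R - s%:R) * (1 / (2 * s%:R - 1) + eps / (2 * (s%:R - 1))).

Definition hamming n (x y : bits n) : nat := #|[set i | x i != y i]|.

Definition mut n (x y : bits n) : R :=
  (n%:R^-1) ^+ hamming x y * (1 - n%:R^-1) ^+ (n - hamming x y).

Definition ea_step n (p : 'I_n -> R) (x y : bits n) : R :=
  if y == x then
    mut x x + \sum_(z : bits n | makespan p x < makespan p z) mut x z
  else if makespan p y <= makespan p x then mut x y else 0.

(* Sub-probability distribution of the current search point at time t
   restricted to runs in which no optimal solution has been seen at times 0..t:
   surv p t x = Pr[x_t = x and T > t], where T = first t with x_t optimal. *)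
Fixpoint surv n (p : 'I_n -> R) (t : nat) : bits n -> R :=
  match t with
  | 0 => fun x => if optimal p x then 0 else (2%:R ^+ n)^-1
  | t'.+1 => fun y => if optimal p y then 0
                     else \sum_(x : bits n) surv p t' x * ea_step p x y
  end.

Definition tail_prob n (p : 'I_n -> R) (t : nat) : R := \sum_(x : bits n) surv p t x.

(* Expected number of fitness evaluations: one for the initial point plus one per
   iteration until an optimum is found, i.e. 1 + E[T] = 1 + sum_{t>=0} Pr[T > t]
   (an extended real, possibly +oo). *)
Definition expected_evals n (p : 'I_n -> R) : \bar R :=
  (1%:E + \sum_(0 <= t <oo) (tail_prob p t)%:E)%E.

End PartitionEA.

(* Put the s large jobs on M1 and the n - s small ones on M2. Writing beta < 1/2 for
   the total size of the small jobs, this point [trap] has makespan 1 - beta, so it is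
   not optimal when s and n are even (a half-half split has makespan 1/2). But a move
   accepted from [trap] keeps the load of M2 in [beta, 1 - beta]: either it moves no
   large job, and then it is [trap] itself, or it puts a large job on M2, leaving room
   for small jobs of total size at most s - 1 times a large job, a constant below
   beta; so Omega(n) small jobs must flip. Standard bit mutation does that with probability
   n^-Omega(n), and the uniform initial point is [trap] with probability 2^-n, so the
   expected number of evaluations is n^Omega(n). *)

From HB Require Import structures.
From mathcomp Require Import all_boot all_order all_algebra.
From mathcomp Require Import all_classical all_reals all_analysis.
From mathcomp.algebra_tactics Require Import ring lra.
From mathcomp Require Import zify.
Import Order.TTheory GRing.Theory Num.Theory.
Set Implicit Arguments. Unset Strict Implicit. Unset Printing Implicit Defensive.
Local Open Scope ring_scope.

Lemma sum_ord_range n m1 m2 :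
  (\sum_(i < n) (m1 <= i < m2))%N = (minn n m2 - m1)%N.
Proof.
elim: n => [|n IHn]; first by rewrite big_ord0 min0n.
by rewrite big_ord_recr /= IHn; case: (leqP m1 n); case: (ltnP n m2) => /=; lia.
Qed.

Lemma bernoulli_ineq (R : realFieldType) (q : R) t :
  0 <= q <= 1 -> 1 - t%:R * q <= (1 - q) ^+ t.
Proof.
move=> /andP[q_ge0 q_le1]; elim: t => [|t IHt]; first by rewrite mul0r subr0.
rewrite exprSr; apply: le_trans (ler_wpM2r _ IHt); last by rewrite subr_ge0.
have t_ge0 : (0 : R) <= t%:R by [].
by rewrite -natr1; nra.
Qed.

Section Mutation.
Variables (R : realType) (n : nat).
Implicit Types x z : bits n.

Lemma hamming_sum x z : hamming x z = (\sum_(i < n) (x i != z i))%N.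
Proof. by rewrite /hamming -sum1_card big_mkcond; apply: eq_bigr => i _; rewrite inE. Qed.

Lemma hamming_eq0 x z : hamming x z = 0%N -> z = x.
Proof.
move/eqP; rewrite hamming_sum sum_nat_eq0 => /forallP same; apply/ffunP => i.
by apply/eqP; rewrite eq_sym -[x i == _]negbK -eqb0; apply: same.
Qed.

Lemma mut_ge0 x z : 0 <= mut R x z.
Proof.
have n1_le1 : n%:R^-1 <= 1 :> R by case: n => [|m]; rewrite ?invr0 // invf_le1 // ler1n.
by apply: mulr_ge0; apply: exprn_ge0; rewrite ?invr_ge0 // subr_ge0.
Qed.

Lemma mut_weight_prod x z (w : R) :
  mut R x z * w ^+ hamming x z =
  \prod_(i < n) (if x i == z i then 1 - n%:R^-1 else w * n%:R^-1).
Proof.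
rewrite (bigID (fun i => x i == z i)) /=.
rewrite (eq_bigr (fun _ => 1 - n%:R^-1)) => [|i ->] //.
rewrite [X in _ = _ * X](eq_bigr (fun _ => w * n%:R^-1)) => [|i /negbTE ->] //.
rewrite !prodr_const /mut.
have card_diff : #|[pred i | x i != z i]| = hamming x z.
  by apply: eq_card => i; rewrite inE.
have card_same : #|[pred i | x i == z i]| = (n - hamming x z)%N.
  have := cardC [pred i | x i == z i]; rewrite card_ord -card_diff.
  have -> : #|[predC [pred i | x i == z i]]| = #|[pred i | x i != z i]| by [].
  by move=> card_n; rewrite -[X in (X - _)%N]card_n addnK.
by rewrite card_same card_diff exprMn; ring.
Qed.

Lemma sum_mut_weight x (w : R) :
  \sum_(z : bits n) mut R x z * w ^+ hamming x z = (1 - n%:R^-1 + w * n%:R^-1) ^+ n.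
Proof.
rewrite (eq_bigr _ (fun z _ => mut_weight_prod x z w)).
pose F i b := if x i == b then 1 - n%:R^-1 else w * n%:R^-1.
rewrite -(bigA_distr_bigA F) (eq_bigr (fun _ => 1 - n%:R^-1 + w * n%:R^-1)).
  by rewrite prodr_const card_ord.
by move=> i _; rewrite big_bool /F; case: (x i) => /=; ring.
Qed.

Lemma sum_mut x : \sum_(z : bits n) mut R x z = 1.
Proof.
have := sum_mut_weight x 1; rewrite mul1r subrK expr1n => <-.
by apply: eq_bigr => z _; rewrite expr1n mulr1.
Qed.

Lemma sum_mut_natr_exp_le x : (0 < n)%N ->
  \sum_(z : bits n) mut R x z * n%:R ^+ hamming x z <= 2%:R ^+ n.
Proof.
move=> n_gt0; rewrite sum_mut_weight mulfV ?pnatr_eq0 -?lt0n //.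
have n1_ge0 : 0 <= n%:R^-1 :> R by rewrite invr_ge0.
have n1_le1 : n%:R^-1 <= 1 :> R by rewrite invf_le1 ?ler1n ?ltr0n.
by apply: lerXn2r; rewrite ?nnegrE; lra.
Qed.

End Mutation.

Section EvolutionaryAlgorithm.
Variables (R : realType) (n : nat) (p : 'I_n -> R).
Implicit Types x y z : bits n.

Definition load z : R := \sum_(i < n) p i * (z i)%:R.

Lemma makespanE z : makespan p z = Num.max (load z) (\sum_(i < n) p i - load z).
Proof. by rewrite /makespan /load -sumrB; congr Num.max; apply: eq_bigr => i _; ring. Qed.

Definition leave_prob x : R :=
  \sum_(z | (z != x) && (makespan p z <= makespan p x)) mut R x z.

Lemma leave_prob_ge0 x : 0 <= leave_prob x.
Proof. by apply: sumr_ge0 => z _; apply: mut_ge0. Qed.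

Lemma ea_step_ge0 x y : 0 <= ea_step p x y.
Proof.
rewrite /ea_step; case: ifP => _.
  by apply: addr_ge0; last apply: sumr_ge0 => z _; apply: mut_ge0.
by case: ifP => _ //; apply: mut_ge0.
Qed.

Lemma ea_step_diag x : ea_step p x x = 1 - leave_prob x.
Proof.
have worse_sum : \sum_(z | makespan p x < makespan p z) mut R x z =
                 \sum_(z | (z != x) && (makespan p x < makespan p z)) mut R x z.
  by apply: eq_bigl => z; case: eqP => [->|]; rewrite ?ltxx.
have leave_sum : leave_prob x =
                 \sum_(z | (z != x) && ~~ (makespan p x < makespan p z)) mut R x z.
  by apply: eq_bigl => z; rewrite -leNgt.
have := sum_mut R x; rewrite (bigD1 x) //= (bigID (fun z => makespan p x < makespan p z)) /=.
by rewrite /ea_step eqxx worse_sum leave_sum => <-; ring.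
Qed.

Lemma leave_prob_le1 x : leave_prob x <= 1.
Proof. by have := ea_step_ge0 x x; rewrite ea_step_diag subr_ge0. Qed.

Lemma surv_ge0 t y : 0 <= surv p t y.
Proof.
elim: t y => [|t IHt] y /=; case: ifP => _ //.
by apply: sumr_ge0 => z _; apply: mulr_ge0 => //; apply: ea_step_ge0.
Qed.

Lemma surv_ge_stay x t : ~~ optimal p x ->
  (2%:R ^+ n)^-1 * (1 - leave_prob x) ^+ t <= surv p t x.
Proof.
move=> /negbTE x_nopt; elim: t => [|t IHt] /=; rewrite x_nopt ?mulr1 //.
rewrite (bigD1 x) //= ea_step_diag exprSr mulrA -[X in X <= _]addr0.
apply: lerD; first by rewrite ler_wpM2r // subr_ge0 leave_prob_le1.
by apply: sumr_ge0 => z _; apply: mulr_ge0; [apply: surv_ge0 | apply: ea_step_ge0].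
Qed.

Lemma tail_prob_ge_surv t x : surv p t x <= tail_prob p t.
Proof.
rewrite /tail_prob (bigD1 x) //= -[X in X <= _]addr0 lerD2l.
by apply: sumr_ge0 => z _; apply: surv_ge0.
Qed.

Lemma expected_evals_ge_stay x (M : nat) : ~~ optimal p x ->
  ((M%:R * (2%:R ^+ n)^-1 * (1 - M%:R * leave_prob x))%:E <= expected_evals p)%E.
Proof.
move=> x_nopt; apply: (@le_trans _ _ (\sum_(0 <= t < M) (tail_prob p t)%:E)%E).
  rewrite -mulrA; set c := _ * (1 - _).
  have -> : M%:R * c = \sum_(0 <= t < M) c by rewrite sumr_const_nat subn0 mulr_natl.
  rewrite sumEFin lee_fin big_nat_cond [X in _ <= X]big_nat_cond.
  apply: ler_sum => t /andP[/andP[_ t_lt_M] _].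
  apply: le_trans (tail_prob_ge_surv t x); apply: le_trans (surv_ge_stay t x_nopt).
  rewrite /c ler_wpM2l ?invr_ge0 ?exprn_ge0 //.
  apply: le_trans (bernoulli_ineq _ _); last by rewrite leave_prob_ge0 leave_prob_le1.
  by rewrite lerD2l lerN2 ler_wpM2r ?leave_prob_ge0 // ler_nat ltnW.
apply: lee_paddl; first by rewrite lee_fin.
apply: nneseries_lim_ge => t _ _; rewrite lee_fin.
by apply: sumr_ge0 => z _; apply: surv_ge0.
Qed.

Lemma leave_prob_mul_le x (K : R) : (0 < n)%N ->
  (forall z, z != x -> makespan p z <= makespan p x -> K <= n%:R ^+ hamming x z) ->
  leave_prob x * K <= 2%:R ^+ n.
Proof.
move=> n_gt0 far; apply: le_trans (sum_mut_natr_exp_le R x n_gt0).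
rewrite /leave_prob mulr_suml.
rewrite [X in _ <= X](bigID (fun z => (z != x) && (makespan p z <= makespan p x))) /=.
rewrite -[X in X <= _]addr0; apply: lerD.
  by apply: ler_sum => z /andP[z_neq_x z_acc]; rewrite ler_wpM2l ?mut_ge0 ?far.
by apply: sumr_ge0 => z _; rewrite mulr_ge0 ?mut_ge0 ?exprn_ge0.
Qed.

(* The hypothesis bounds [leave_prob x] by [2^n / X^2]; the run then stays at [x]
   for [M ~ X^2 / 2^(n+1)] steps with probability at least [2^-(n+1)]. *)
Lemma expected_evals_ge_trap x (X : R) : (0 < n)%N -> ~~ optimal p x ->
  8 * (2%:R ^+ n) ^+ 2 <= X ->
  (forall z, z != x -> makespan p z <= makespan p x -> X ^+ 2 <= n%:R ^+ hamming x z) ->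
  (X%:E <= expected_evals p)%E.
Proof.
set T : R := 2%:R ^+ n; move=> n_gt0 x_nopt X_ge far.
have T_ge1 : 1 <= T by rewrite exprn_ege1 ?ler1n.
have lX2_le : leave_prob x * X ^+ 2 <= T := leave_prob_mul_le n_gt0 far.
have l_ge0 := leave_prob_ge0 x.
set M := Num.truncn (X ^+ 2 / (2 * T)).
have M_le : 2 * T * M%:R <= X ^+ 2.
  by rewrite mulrC -ler_pdivlMr ?mulr_gt0 ?truncn_le ?divr_ge0 ?sqr_ge0 ?mulr_ge0; lra.
have M_gt : X ^+ 2 < 2 * T * (M%:R + 1).
  by rewrite mulrC -ltr_pdivrMr ?mulr_gt0 ?natr1 ?truncnS_gt //; lra.
apply: le_trans (expected_evals_ge_stay M x_nopt); rewrite lee_fin.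
have Ml_le : M%:R * leave_prob x <= 1 / 2.
  have MlX2 : 2 * T * M%:R * leave_prob x <= X ^+ 2 * leave_prob x by rewrite ler_wpM2r.
  have : T * (2 * (M%:R * leave_prob x)) <= T * 1 by lra.
  by rewrite ler_pM2l ?(lt_le_trans ltr01) //; lra.
have TX_le : T * X <= M%:R / 2.
  have X_ge1 : 1 <= X by have := exprn_ege1 2 T_ge1; lra.
  have TX_ge1 : 1 <= T * X by rewrite mulr_ege1.
  have X2_ge : 8 * T ^+ 2 * X <= X ^+ 2 by rewrite [X ^+ 2]expr2 ler_wpM2r //; lra.
  have : T * (4 * (T * X)) < T * (M%:R + 1) by rewrite expr2 in X2_ge; lra.
  by rewrite ltr_pM2l ?(lt_le_trans ltr01) //; lra.
have M_ge0 : 0 <= M%:R :> R by [].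
rewrite mulrAC ler_pdivlMr ?(lt_le_trans ltr01) // mulrC -/T; nra.
Qed.

End EvolutionaryAlgorithm.

Section TwoSizeInstance.
Variables (R : realType) (n s : nat) (a b : R).
Implicit Types z : bits n.

Definition two_size (i : 'I_n) : R := if (i < s)%N then a else b.

Definition nlarge z : nat := \sum_(i < n) ((i < s)%N && z i).
Definition nsmall z : nat := \sum_(i < n) (~~ (i < s)%N && z i).

Definition trap : bits n := [ffun i : 'I_n => ~~ (i < s)%N].

Lemma load_two_size z : load two_size z = a * (nlarge z)%:R + b * (nsmall z)%:R.
Proof.
rewrite /load /nlarge /nsmall !natr_sum !mulr_sumr -big_split; apply: eq_bigr => i _.
by rewrite /two_size; case: (i < s)%N; case: (z i) => /=; ring.
Qed.

Hypothesis s_le_n : (s <= n)%N.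

Lemma sum_two_size : \sum_(i < n) two_size i = a * s%:R + b * (n - s)%:R.
Proof.
rewrite (eq_bigr (fun i : 'I_n => a * (0 <= i < s)%N%:R + b * (s <= i < n)%N%:R)) => [|i _].
  by rewrite big_split -!mulr_sumr -!natr_sum !sum_ord_range (minn_idPr s_le_n) minnn subn0.
by rewrite /two_size ltn_ord andbT /=; case: ltnP => _ /=; ring.
Qed.

Lemma nsmall_le z : (nsmall z <= n - s)%N.
Proof.
rewrite -[n in (_ <= n - s)%N]minnn -sum_ord_range; apply: leq_sum => i _.
by rewrite ltn_ord andbT; case: ltnP => //= _; apply: leq_b1.
Qed.

Lemma hamming_trap z : (hamming trap z + nsmall z = nlarge z + (n - s))%N.
Proof.
rewrite -[n in (_ + (n - s))%N]minnn -sum_ord_range hamming_sum -!big_split.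
by apply: eq_bigr => i _; rewrite ffunE ltn_ord andbT; case: ltnP; case: (z i).
Qed.

Lemma makespan_trap : b * (n - s)%:R <= a * s%:R -> makespan two_size trap = a * s%:R.
Proof.
move=> small_le; rewrite makespanE sum_two_size load_two_size.
have -> : nlarge trap = 0%N by apply: big1 => i _; rewrite ffunE; case: (i < s)%N.
have -> : nsmall trap = (n - s)%N.
  rewrite -[n in RHS]minnn -sum_ord_range; apply: eq_bigr => i _.
  by rewrite ffunE ltn_ord andbT andbb; case: ltnP.
by rewrite mulr0 add0r addrK max_r.
Qed.

(* An accepted [z] keeps the load of M2 within [[b (n - s), a s]]. With no large job
   on M2 all small jobs are there, i.e. [z = trap]; otherwise at most [a (s - 1) / b]
   small jobs fit next to the large ones. *)
Lemma trap_far z : 0 <= a -> 0 < b -> b * (n - s)%:R <= a * s%:R ->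
  z != trap -> makespan two_size z <= makespan two_size trap ->
  b * (n - s)%:R - a * (s%:R - 1) <= b * (hamming trap z)%:R.
Proof.
move=> a_ge0 b_gt0 small_le z_neq.
rewrite makespan_trap // makespanE sum_two_size load_two_size ge_max => /andP[load_le rest_le].
have hamR : (hamming trap z)%:R = (nlarge z)%:R + (n - s)%:R - (nsmall z)%:R :> R.
  by rewrite -natrD -hamming_trap natrD addrK.
have [nlarge0 | nlarge_gt0] := posnP (nlarge z).
  have nsmall_full : nsmall z = (n - s)%N.
    apply/eqP; rewrite eqn_leq nsmall_le -(ler_nat R) -(ler_pM2l b_gt0).
    by move: rest_le; rewrite nlarge0 mulr0 add0r; lra.
  move: (hamming_trap z); rewrite nlarge0 nsmall_full add0n => /eqP.
  by rewrite -[X in _ == X]add0n eqn_add2r => /eqP/hamming_eq0 z_eq; rewrite z_eq eqxx in z_neq.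
have a_le : a <= a * (nlarge z)%:R by rewrite ler_peMr // ler1n.
have b_nlarge_ge0 : 0 <= b * (nlarge z)%:R by rewrite mulr_ge0 // ltW.
by rewrite hamR; lra.
Qed.

(* Half of the large and half of the small jobs on M2 balance the loads exactly. *)
Lemma trap_not_optimal : ~~ odd s -> ~~ odd n -> b * (n - s)%:R < a * s%:R ->
  ~~ optimal two_size trap.
Proof.
move=> s_even n_even small_lt; set k := s./2; set h := (n - s)./2.
have s_eq : s = (k + k)%N by rewrite addnn -[LHS]odd_double_half (negbTE s_even).
have ns_eq : (n - s = h + h)%N.
  by rewrite addnn -[LHS]odd_double_half oddB // (negbTE s_even) (negbTE n_even).
pose y : bits n := [ffun i : 'I_n => (i < k)%N || (n - h <= i)%N].
have nlarge_y : nlarge y = k.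
  rewrite -[k]subn0 -(minn_idPr (_ : k <= n)%N) -?sum_ord_range; last lia.
  by apply: eq_bigr => i _; rewrite ffunE; case: (ltnP i s); case: (ltnP i k) => //= *; lia.
have nsmall_y : nsmall y = h.
  have -> : h = (minn n n - (n - h))%N by rewrite minnn; lia.
  rewrite -sum_ord_range; apply: eq_bigr => i _.
  by rewrite ffunE ltn_ord andbT; case: (ltnP i s); case: (ltnP i k); case: leqP => //= *; lia.
have load_y : load two_size y = a * k%:R + b * h%:R by rewrite load_two_size nlarge_y nsmall_y.
apply/forallPn; exists y; rewrite -ltNge makespan_trap ?ltW // makespanE load_y sum_two_size.
by rewrite ns_eq s_eq !natrD in small_lt *; rewrite max_l; lra.
Qed.

End TwoSizeInstance.

Section GstarInstance.
Variables (R : realType) (s : nat) (eps : R).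
Hypotheses (s_ge2 : (2 <= s)%N) (eps_gt0 : 0 < eps) (eps_lt : eps < 1 / (2 * s%:R - 1)).

Local Notation S := (s%:R : R).
Local Notation a := (1 / (2 * S - 1) - eps / (2 * S)).
Local Notation b n := ((S - 1) / (n%:R - S) * (1 / (2 * S - 1) + eps / (2 * (S - 1)))).
(* [beta] is the total size of the small jobs, and [gamma] the amount by which it
   exceeds the room [(s - 1) a] left beside one large job. *)
Let beta := (S - 1) / (2 * S - 1) + eps / 2.
Let gamma := eps / 2 + (S - 1) * eps / (2 * S).

Let S_ge2 : 2 <= S. Proof. by rewrite ler_nat. Qed.
Let S_gt0 : 0 < S. Proof. by have := S_ge2; lra. Qed.
Let S1_gt0 : 0 < S - 1. Proof. by have := S_ge2; lra. Qed.
Let S21_gt0 : 0 < 2 * S - 1. Proof. by have := S_ge2; lra. Qed.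
Let S_neq0 := lt0r_neq0 S_gt0.
Let S1_neq0 := lt0r_neq0 S1_gt0.
Let S21_neq0 := lt0r_neq0 S21_gt0.

Let large_load : a * S = 1 - beta.
Proof. by rewrite /beta; field; rewrite S21_neq0 S_neq0. Qed.

Let small_load n : (s < n)%N -> b n * (n - s)%:R = beta.
Proof.
move=> s_lt_n; have ns_neq0 : n%:R - S != 0 by rewrite subr_eq0 (eqr_nat R) gtn_eqF.
by rewrite (natrB R (ltnW s_lt_n)) /beta; field; rewrite S21_neq0 S1_neq0 ns_neq0.
Qed.

Let beta_gt0 : 0 < beta.
Proof. by rewrite /beta addr_gt0 ?divr_gt0. Qed.

Let beta_lt_half : beta < 1 / 2.
Proof.
have : eps * (2 * S - 1) < 1 by rewrite -ltr_pdivlMr.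
have -> : beta = 1 / 2 - (1 - eps * (2 * S - 1)) / (2 * (2 * S - 1)).
  by rewrite /beta; field; rewrite S21_neq0.
by move=> eps_S; rewrite ltrBlDr ltrDl divr_gt0 ?subr_gt0 ?mulr_gt0.
Qed.

Let b_gt0 n : (s < n)%N -> 0 < b n.
Proof.
move=> s_lt_n; have ns_gt0 : 0 < n%:R - S by rewrite subr_gt0 (ltr_nat R).
by rewrite mulr_gt0 ?divr_gt0 // addr_gt0 ?divr_gt0 ?mulr_gt0.
Qed.

Let a_ge0 : 0 <= a.
Proof. by rewrite -(pmulr_lge0 _ S_gt0) large_load subr_ge0; have := beta_lt_half; lra. Qed.

Let gamma_gt0 : 0 < gamma.
Proof. by rewrite /gamma addr_gt0 ?divr_gt0 ?mulr_gt0. Qed.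

Let gap n : (s < n)%N -> b n * (n - s)%:R - a * (S - 1) = gamma.
Proof.
by move=> s_lt_n; rewrite small_load // /beta /gamma; field; rewrite S21_neq0 S_neq0.
Qed.

Let small_lt_large n : (s < n)%N -> b n * (n - s)%:R < a * S.
Proof. by move=> s_lt_n; rewrite small_load // large_load; have := beta_lt_half; lra. Qed.

Lemma Gstar_trap_far : exists2 d : R, 0 < d & forall n (z : bits n), (s < n)%N ->
  z != trap n s ->
  makespan (Gstar_p s eps (n:=n)) z <= makespan (Gstar_p s eps (n:=n)) (trap n s) ->
  d * (n - s)%:R <= (hamming (trap n s) z)%:R.
Proof.
exists (gamma / beta); first exact: divr_gt0.
move=> n z s_lt_n z_neq z_acc.
have := trap_far (ltnW s_lt_n) a_ge0 (b_gt0 s_lt_n) (ltW (small_lt_large s_lt_n)) z_neq z_acc.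
rewrite gap // => gamma_le.
rewrite mulrAC ler_pdivrMr // -(small_load s_lt_n).
by have := ler_wpM2r (ler0n R (n - s)) gamma_le; lra.
Qed.

Lemma Gstar_trap_not_optimal n : (s < n)%N -> ~~ odd s -> ~~ odd n ->
  ~~ optimal (Gstar_p s eps (n:=n)) (trap n s).
Proof.
by move=> s_lt_n s_even n_even; apply: trap_not_optimal; rewrite ?small_lt_large // ltnW.
Qed.

End GstarInstance.

Lemma eventually_exp_le_powR (R : realType) (c : R) : 0 < c ->
  exists N, forall n, (N <= n)%N -> 8 * (2%:R ^+ n) ^+ 2 <= n%:R `^ (c * n%:R).
Proof.
move=> c_gt0; exists (maxn 2 (Num.truncn ((16 : R) `^ c^-1)).+1) => n.
rewrite geq_max => /andP[n_ge2 n_gt].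
have pow_ge16 : 16 <= n%:R `^ c.
  have -> : (16 : R) = (16 `^ c^-1) `^ c by rewrite -powRrM mulVf ?lt0r_neq0 ?powRr1.
  apply: (ge0_ler_powR (ltW c_gt0)); rewrite ?nnegrE ?powR_ge0 //.
  by apply/ltW/(lt_le_trans (truncnS_gt _)); rewrite ler_nat.
have nat_bound : (8 * (2 ^ n) ^ 2 <= 16 ^ n)%N.
  rewrite -expnM (_ : 16 = 2 ^ 4)%N // -expnM (_ : 8 = 2 ^ 3)%N // -expnD leq_pexp2l //; lia.
rewrite powRrM powR_mulrn ?powR_ge0 //.
apply: le_trans (lerXn2r n _ _ pow_ge16); rewrite ?nnegrE ?powR_ge0 //.
by rewrite -(ler_nat R) natrM !natrX in nat_bound.
Qed.

Unset Implicit Arguments.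

Theorem theorem2 (R : realType) (s : nat) (eps : R) :
  (2 <= s)%N -> ~~ odd s ->
  0 < eps -> eps < 1 / (2 * s%:R - 1) ->
  exists c : R, 0 < c /\
  exists N : nat, forall n : nat, (N <= n)%N -> ~~ odd n ->
    ((n%:R `^ (c * n%:R))%:E <= expected_evals (Gstar_p s eps (n:=n)))%E.
Proof.
move=> s_ge2 s_even eps_gt0 eps_lt.
have [d d_gt0 Gstar_far] := Gstar_trap_far s_ge2 eps_gt0 eps_lt.
have c_gt0 : 0 < d / 4 by rewrite divr_gt0.
have [N growth] := eventually_exp_le_powR c_gt0.
exists (d / 4); split => //; exists (maxn N (s + s)) => n.
rewrite geq_max => /andP[N_le_n ss_le_n] n_even.
have s_lt_n : (s < n)%N by lia.
apply: (expected_evals_ge_trap (x := trap n s)); rewrite ?growth ?Gstar_trap_not_optimal //.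
  by lia.
move=> z z_neq z_acc; rewrite -powR_mulrn ?powR_ge0 // -powRrM -powR_mulrn //.
apply: ler_powR; first by rewrite ler1n; lia.
apply: le_trans (Gstar_far n z s_lt_n z_neq z_acc).
have : n%:R <= 2 * (n - s)%:R :> R by rewrite -natrM ler_nat; lia.
by nra.
Qed.
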